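(* Let $\mathcal{A}$ be a probabilistic automaton with state set $Q$. Every limit-word of the Markov monoid of $\mathcal{A}$ has $\sharp$-height at most $|Q|$; equivalently, the Markov monoid of $\mathcal{A}$ equals $S_{|Q|}$.
   Context: Fix a finite alphabet $A$ and a probabilistic automaton $\mathcal{A}=(Q,q_0,\Delta,F)$, $\Delta:Q\times A\to\mathcal{D}(Q)$. A limit-word is a map $\mathbf{u}:Q\times Q\to\{0,1\}$ such that every $s$ has some $t$ with $\mathbf{u}(s,t)=1$. Concatenation: $(\mathbf{u}\cdot\mathbf{v})(s,t)=1$ iff there is $q$ with $\mathbf{u}(s,q)=\mathbf{v}(q,t)=1$. $\mathbf{u}$ is idempotent if $\mathbf{u}\cdot\mathbf{u}=\mathbf{u}$; for idempotent $\mathbf{u}$, $s$ is $\mathbf{u}$-recurrent if for all $t$, $\mathbf{u}(s,t)=1\Rightarrow\mathbf{u}(t,s)=1$, and $\mathbf{u}^\sharp(s,t)=1$ iff $\mathbf{u}(s,t)=1$ and $t$ is $\mathbf{u}$-recurrent. For $a\in A$, $\mathbf{a}(s,t)=1$ iff $\Delta(s,a)(t)>0$; $\mathbf{1}$ is the identity. The Markov monoid of $\mathcal{A}$ is the smallest set of limit-words containing $\{\mathbf{a}\mid a\in A\}\cup\{\mathbf{1}\}$ and closed under concatenation and iteration of idempotents. For a set $T$ of limit-words let $\langle T\rangle$ be the set of finite concatenations of elements of $T$. Define $S_0=\langle\{\mathbf{a}\mid a\in A\}\cup\{\mathbf{1}\}\rangle$ and $S_{p+1}=\langle S_p\cup\{\mathbf{u}^\sharp\mid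 \mathbf{u}\in S_p,\ \mathbf{u}\text{ idempotent}\}\rangle$. The $\sharp$-height of a limit-word $\mathbf{u}$ is the least $p$ such that $\mathbf{u}\in S_p$. *)

From HB Require Import structures.
From mathcomp Require Import all_boot all_order all_algebra.
Set Implicit Arguments. Unset Strict Implicit. Unset Printing Implicit Defensive.
Import Order.TTheory GRing.Theory Num.Theory.
Local Open Scope ring_scope.

Record prob_automaton (R : realFieldType) (A Q : finType) := PA {
  pa_init : Q;
  pa_delta : Q -> A -> {ffun Q -> R};
  pa_final : {set Q};
  pa_delta_ge0 : forall q a t, 0 <= pa_delta q a t;
  pa_delta_sum : forall q a, \sum_(t : Q) pa_delta q a t = 1
}.

Definition lword (Q : finType) := {ffun Q * Q -> bool}.

Definition is_limit_word (Q : finType) (u : lword Q) : Prop :=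
  forall s : Q, exists t : Q, u (s, t).

Definition lw_mul (Q : finType) (u v : lword Q) : lword Q :=
  [ffun st : Q * Q => [exists q : Q, u (st.1, q) && v (q, st.2)]].

Definition lw_one (Q : finType) : lword Q := [ffun st : Q * Q => st.1 == st.2].

Definition lw_idempotent (Q : finType) (u : lword Q) : bool := lw_mul u u == u.

Definition lw_recurrent (Q : finType) (u : lword Q) (s : Q) : bool :=
  [forall t : Q, u (s, t) ==> u (t, s)].

Definition lw_sharp (Q : finType) (u : lword Q) : lword Q :=
  [ffun st : Q * Q => u st && lw_recurrent u st.2].

Definition lw_letter (R : realFieldType) (A Q : finType)
  (P : prob_automaton R A Q) (a : A) : lword Q :=
  [ffun st : Q * Q => 0 < pa_delta P st.1 a st.2].

Inductive markov_monoid (R : realFieldType) (A Q : finType)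
  (P : prob_automaton R A Q) : lword Q -> Prop :=
| mm_letter a : markov_monoid P (lw_letter P a)
| mm_one : markov_monoid P (@lw_one Q)
| mm_mul u v : markov_monoid P u -> markov_monoid P v -> markov_monoid P (lw_mul u v)
| mm_sharp u : markov_monoid P u -> lw_idempotent u -> markov_monoid P (lw_sharp u).

Inductive lw_gen (Q : finType) (T : lword Q -> Prop) : lword Q -> Prop :=
| lg_base u : T u -> lw_gen T u
| lg_mul u v : lw_gen T u -> lw_gen T v -> lw_gen T (lw_mul u v).

Fixpoint S_level (R : realFieldType) (A Q : finType)
  (P : prob_automaton R A Q) (p : nat) : lword Q -> Prop :=
  match p with
  | 0 => lw_gen (fun u => (exists a, u = lw_letter P a) \/ u = @lw_one Q)
  | p'.+1 => lw_gen (fun u => S_level P p' u \/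
                 exists v, [/\ S_level P p' v, lw_idempotent v & u = lw_sharp v])
  end.

Definition sharp_height_le (R : realFieldType) (A Q : finType)
  (P : prob_automaton R A Q) (u : lword Q) (n : nat) : Prop :=
  exists p, (p <= n)%N /\ S_level P p u.

From mathcomp Require Import all_boot all_order all_algebra.
From mathcomp Require Import zify.
Set Implicit Arguments. Unset Strict Implicit. Unset Printing Implicit Defensive.
Import Order.TTheory.

(* For an idempotent limit-word f, count the distinct rows of its recurrent
   states (its recurrence classes); there are at most |Q| of them.  Every
   element u of the Markov monoid factors as u = a g b through a "stable"
   idempotent g (one whose successors are all recurrent, e.g. 1 or any e#),
   and lies in S_(|Q| - classes g).  If f is idempotent and factors through a
   stable g, then classes f <= classes g, with equality only when f# = f.
   Hence each sharp that does not act trivially strictly decreases the class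
   count of the stable idempotent witnessing it, so at most |Q| nested sharps
   are ever useful. *)

Section LimitWords.

Variable Q : finType.
Implicit Types (u v e f g : lword Q) (r s t : Q).

Lemma lw_mulP u v s t :
  reflect (exists q, u (s, q) /\ v (q, t)) (lw_mul u v (s, t)).
Proof.
rewrite /lw_mul ffunE /=; apply: (iffP existsP).
- by move=> [q /andP[h1 h2]]; exists q.
- by move=> [q [h1 h2]]; exists q; rewrite h1 h2.
Qed.

Lemma lw_mulA u v w : lw_mul u (lw_mul v w) = lw_mul (lw_mul u v) w.
Proof.
apply/ffunP=> -[s t]; apply/lw_mulP/lw_mulP.
- move=> [p [hu /lw_mulP [q [hv hw]]]].
  by exists q; split=> //; apply/lw_mulP; exists p.
- move=> [q [/lw_mulP [p [hu hv]] hw]].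
  by exists p; split=> //; apply/lw_mulP; exists q.
Qed.

Lemma lw_oneE s t : (@lw_one Q) (s, t) = (s == t).
Proof. by rewrite ffunE. Qed.

Lemma lw_mul1w u : lw_mul (@lw_one Q) u = u.
Proof.
apply/ffunP=> -[s t]; apply/lw_mulP/idP.
- by move=> [q []]; rewrite lw_oneE => /eqP <-.
- by move=> h; exists s; rewrite lw_oneE eqxx.
Qed.

Lemma lw_mulw1 u : lw_mul u (@lw_one Q) = u.
Proof.
apply/ffunP=> -[s t]; apply/lw_mulP/idP.
- by move=> [q []]; rewrite lw_oneE => h /eqP <-.
- by move=> h; exists t; rewrite lw_oneE eqxx.
Qed.

Lemma lw_sharpE e s t : lw_sharp e (s, t) = e (s, t) && lw_recurrent e t.
Proof. by rewrite ffunE. Qed.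

Lemma lw_recurrentP f r :
  reflect (forall t, f (r, t) -> f (t, r)) (lw_recurrent f r).
Proof.
apply: (iffP forallP) => H t; first by move/implyP: (H t).
exact/implyP/H.
Qed.

Lemma lw_one_limit : is_limit_word (@lw_one Q).
Proof. by move=> s; exists s; rewrite lw_oneE. Qed.

Lemma lw_mul_limit u v :
  is_limit_word u -> is_limit_word v -> is_limit_word (lw_mul u v).
Proof.
move=> hu hv s; have [q h1] := hu s; have [t h2] := hv q.
by exists t; apply/lw_mulP; exists q.
Qed.

Definition lw_row f r : {set Q} := [set t | f (r, t)].

Section Idempotent.

Variable f : lword Q.
Hypotheses (f_idem : lw_idempotent f) (f_limit : is_limit_word f).

Lemma lw_idem_trans r s t : f (r, s) -> f (s, t) -> f (r, t).
Proof. by move=> hrs hst; rewrite -(eqP f_idem); apply/lw_mulP; exists s. Qed.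

Lemma lw_recurrent_refl r : lw_recurrent f r -> f (r, r).
Proof.
move=> /lw_recurrentP rec_r; have [t ht] := f_limit r.
exact: lw_idem_trans ht (rec_r _ ht).
Qed.

Lemma lw_recurrent_succ r t : lw_recurrent f r -> f (r, t) -> lw_recurrent f t.
Proof.
move=> /lw_recurrentP rec_r hrt; apply/lw_recurrentP => w htw.
exact: lw_idem_trans (rec_r _ (lw_idem_trans hrt htw)) hrt.
Qed.

Lemma lw_recurrent_exists s : exists2 t, f (s, t) & lw_recurrent f t.
Proof.
(* The successors of a state t of minimal row size all have the row of t. *)
have [t0 hst0] := f_limit s.
have row_t0 : t0 \in lw_row f s by rewrite inE.
case: (arg_minnP (fun t => #|lw_row f t|) row_t0) => t row_t row_min.
have hst : f (s, t) by have := row_t : t \in _; rewrite inE.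
have row_succ x : f (t, x) -> lw_row f x = lw_row f t.
  move=> htx; apply/eqP; rewrite eqEcard; apply/andP; split.
    by apply/subsetP=> y; rewrite !inE; apply: lw_idem_trans htx.
  have : x \in lw_row f s by rewrite inE (lw_idem_trans hst htx).
  exact: row_min.
have [u htu] := f_limit t.
exists u; first exact: lw_idem_trans hst htu.
apply/lw_recurrentP => v huv.
have : u \in lw_row f v by rewrite row_succ ?inE // (lw_idem_trans htu huv).
by rewrite inE.
Qed.

Lemma lw_sharp_limit : is_limit_word (lw_sharp f).
Proof.
by move=> s; have [t hst rec_t] := lw_recurrent_exists s; exists t; rewrite lw_sharpE hst.
Qed.

End Idempotent.

Definition lw_recset f : {set Q} := [set r | lw_recurrent f r].
Definition lw_rec_rows f : {set {set Q}} := [set lw_row f r | r in lw_recset f].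
Definition lw_nclasses f := #|lw_rec_rows f|.

Definition lw_stable g := lw_idempotent g /\ forall s t, g (s, t) -> lw_recurrent g t.

Definition lw_factors_through f g := exists a b, f = lw_mul a (lw_mul g b).

Lemma lw_nclasses_le_card f : lw_nclasses f <= #|Q|.
Proof. exact: leq_trans (leq_imset_card _ _) (max_card _). Qed.

Lemma lw_one_stable : lw_stable (@lw_one Q).
Proof.
split; first by apply/eqP/lw_mul1w.
by move=> s t _; apply/lw_recurrentP=> u; rewrite !lw_oneE => /eqP ->.
Qed.

Lemma lw_stable_refl g s t : lw_stable g -> g (s, t) -> g (t, t).
Proof.
move=> [g_idem g_rec] hst.
have : lw_mul g g (s, t) by rewrite (eqP g_idem).
move=> /lw_mulP [w [hsw hwt]]; have /lw_recurrentP rec_w := g_rec _ _ hsw.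
exact: (lw_idem_trans g_idem (rec_w t hwt) hwt).
Qed.

Section Sharp.

Variable e : lword Q.
Hypotheses (e_idem : lw_idempotent e) (e_limit : is_limit_word e).

Lemma lw_sharp_stable : lw_stable (lw_sharp e).
Proof.
split.
- apply/eqP/ffunP=> -[s t]; apply/lw_mulP/idP.
  + move=> [q []]; rewrite !lw_sharpE => /andP[hsq _] /andP[hqt ->].
    by rewrite (lw_idem_trans e_idem hsq hqt).
  + rewrite lw_sharpE => /andP[hst rec_t]; exists t.
    by rewrite !lw_sharpE hst rec_t (lw_recurrent_refl e_idem e_limit rec_t).
- move=> s t; rewrite lw_sharpE => /andP[_ rec_t]; apply/lw_recurrentP => u.
  by rewrite !lw_sharpE rec_t => /andP[/(lw_recurrentP _ _ rec_t) ->].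
Qed.

Lemma lw_nclasses_sharp : lw_nclasses (lw_sharp e) <= lw_nclasses e.
Proof.
apply/subset_leq_card/subsetP=> X /imsetP [r]; rewrite inE => /lw_recurrentP rec_r ->.
have rec_r_e : lw_recurrent e r.
  have [z hrz rec_z] := lw_recurrent_exists e_idem e_limit r.
  have : lw_sharp e (z, r) by apply: rec_r; rewrite lw_sharpE hrz.
  by rewrite lw_sharpE => /andP[].
apply/imsetP; exists r; first by rewrite inE.
apply/setP=> t; rewrite !inE lw_sharpE andb_idr //.
exact: lw_recurrent_succ.
Qed.

End Sharp.

Section FactorThroughStable.

Variables f g a b : lword Q.
Hypotheses (f_idem : lw_idempotent f) (f_limit : is_limit_word f).
Hypotheses (g_stable : lw_stable g) (fE : f = lw_mul a (lw_mul g b)).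

Lemma lw_factorP s t :
  f (s, t) <-> exists p q, [/\ a (s, p), g (p, q) & b (q, t)].
Proof.
rewrite fE; split.
- by move=> /lw_mulP [p [hsp /lw_mulP [q [hpq hqt]]]]; exists p, q.
- by move=> [p [q [hsp hpq hqt]]]; apply/lw_mulP; exists p; split=> //; apply/lw_mulP; exists q.
Qed.

(* Junk value [r] when no factorisation of the loop [f (r, r)] exists. *)
Definition factor_mid r :=
  if [pick q | [exists p, a (r, p) && g (p, q)] && b (q, r)] is Some q then q else r.

Lemma factor_midP r :
  f (r, r) -> exists p, [/\ a (r, p), g (p, factor_mid r) & b (factor_mid r, r)].
Proof.
move=> /lw_factorP [p [q [hrp hpq hqr]]]; rewrite /factor_mid; case: pickP => [q'|no_q].
- by move=> /andP[/existsP [p' /andP[hrp' hpq']] hq'r]; exists p'.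
- by have := no_q q; rewrite hqr andbT => /negbT /existsPn /(_ p); rewrite hrp hpq.
Qed.

Definition factor_mid_rows := [set lw_row g (factor_mid r) | r in lw_recset f].

Lemma factor_mid_rows_sub : factor_mid_rows \subset lw_rec_rows g.
Proof.
apply/subsetP=> Y /imsetP [r]; rewrite inE.
move=> /(lw_recurrent_refl f_idem f_limit) /factor_midP [p [_ hpm _]] ->.
by apply: imset_f; rewrite inE (proj2 g_stable _ _ hpm).
Qed.

Lemma row_factor_mid_inj r r' :
  r \in lw_recset f -> r' \in lw_recset f ->
  lw_row g (factor_mid r) = lw_row g (factor_mid r') -> lw_row f r = lw_row f r'.
Proof.
rewrite !inE => rec_r rec_r' row_eq.
have [p [hrp hpm _]] := factor_midP (lw_recurrent_refl f_idem f_limit rec_r).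
have [p' [_ hpm' hmr']] := factor_midP (lw_recurrent_refl f_idem f_limit rec_r').
have hmm : g (factor_mid r, factor_mid r').
  have : factor_mid r' \in lw_row g (factor_mid r').
    by rewrite inE (lw_stable_refl g_stable hpm').
  by rewrite -row_eq inE.
have hrr' : f (r, r').
  apply/lw_factorP; exists p, (factor_mid r'); split=> //.
  exact: (lw_idem_trans (proj1 g_stable) hpm hmm).
have hr'r : f (r', r) by move/lw_recurrentP: rec_r; apply.
apply/setP=> t; rewrite !inE; apply/idP/idP; exact: lw_idem_trans.
Qed.

Lemma lw_nclasses_le_factor_mid_rows : lw_nclasses f <= #|factor_mid_rows|.
Proof.
pose lift Y := if [pick r in lw_recset f | lw_row g (factor_mid r) == Y] is Some r
               then lw_row f r else set0.
suff sub_lift : lw_rec_rows f \subset lift @: factor_mid_rows.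
  exact: leq_trans (subset_leq_card sub_lift) (leq_imset_card _ _).
apply/subsetP=> X /imsetP [r rec_r ->]; apply/imsetP.
exists (lw_row g (factor_mid r)); first exact: imset_f.
rewrite /lift; case: pickP => [r' /andP[rec_r' /eqP row_eq] | /(_ r)].
- exact: row_factor_mid_inj rec_r rec_r' (esym row_eq).
- by rewrite rec_r eqxx.
Qed.

Lemma lw_nclasses_factor_le : lw_nclasses f <= lw_nclasses g.
Proof.
exact: leq_trans lw_nclasses_le_factor_mid_rows (subset_leq_card factor_mid_rows_sub).
Qed.

Lemma lw_sharp_factor_id : lw_nclasses f = lw_nclasses g -> lw_sharp f = f.
Proof.
move=> eq_n.
have factor_mid_rowsE : factor_mid_rows = lw_rec_rows g.
  apply/eqP; rewrite eqEcard factor_mid_rows_sub /= -/(lw_nclasses g) -eq_n.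
  exact: lw_nclasses_le_factor_mid_rows.
apply/ffunP=> -[s t]; rewrite lw_sharpE andb_idr // => /lw_factorP [p [q [_ hpq hqt]]].
have : lw_row g q \in factor_mid_rows.
  by rewrite factor_mid_rowsE; apply: imset_f; rewrite inE (proj2 g_stable _ _ hpq).
move=> /imsetP [r]; rewrite inE => rec_r row_eq.
have hmq : g (factor_mid r, q).
  have : q \in lw_row g q by rewrite inE (lw_stable_refl g_stable hpq).
  by rewrite row_eq inE.
have [p' [hrp' hpm' _]] := factor_midP (lw_recurrent_refl f_idem f_limit rec_r).
apply: (lw_recurrent_succ f_idem rec_r).
apply/lw_factorP; exists p', q; split=> //.
exact: (lw_idem_trans (proj1 g_stable) hpm' hmq).
Qed.

End FactorThroughStable.

End LimitWords.

Section MarkovMonoid.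

Variables (R : realFieldType) (A Q : finType) (P : prob_automaton R A Q).
Implicit Types (u v e g : lword Q).

Lemma S_level_mono p q u : p <= q -> S_level P p u -> S_level P q u.
Proof.
move=> /subnK <-; elim: (q - p) => [|k IH] // hu.
by rewrite addSn; apply: lg_base; left; apply: IH.
Qed.

Lemma S_level_mul p u v : S_level P p u -> S_level P p v -> S_level P p (lw_mul u v).
Proof. by case: p => [|p]; apply: lg_mul. Qed.

Lemma S_level_markov_monoid p u : S_level P p u -> markov_monoid P u.
Proof.
elim: p u => [|p IH] u /=; elim=> [w Hw | w1 w2 _ H1 _ H2]; try exact: mm_mul.
- by case: Hw => [[a ->]|->]; constructor.
- by case: Hw => [/IH // | [v [/IH v_mm v_idem ->]]]; apply: mm_sharp.
Qed.

Lemma lw_letter_limit a : is_limit_word (lw_letter P a).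
Proof.
move=> s; case: (pickP (fun t => 0 < pa_delta P s a t)%R) => [t hst | no_t].
  by exists t; rewrite ffunE.
have := pa_delta_sum P s a; rewrite big1 => [/eqP|t _]; first by rewrite eq_sym GRing.oner_eq0.
by have := pa_delta_ge0 P s a t; rewrite le_eqVlt no_t orbF => /eqP <-.
Qed.

Lemma markov_monoid_limit u : markov_monoid P u -> is_limit_word u.
Proof.
elim=> [a | | {}u v _ u_limit _ v_limit | e _ e_limit e_idem].
- exact: lw_letter_limit.
- exact: lw_one_limit.
- exact: lw_mul_limit.
- exact: lw_sharp_limit.
Qed.

Definition height_witness u g :=
  [/\ lw_stable g, lw_factors_through u g & S_level P (#|Q| - lw_nclasses g) u].

Lemma height_witness_base u : S_level P 0 u -> height_witness u (@lw_one Q).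
Proof.
move=> u0; split; [exact: lw_one_stable | | exact: S_level_mono u0].
by exists u, (@lw_one Q); rewrite lw_mul1w lw_mulw1.
Qed.

Lemma height_witness_mul u v g g' :
  height_witness u g -> height_witness v g' ->
  height_witness (lw_mul u v) (if lw_nclasses g <= lw_nclasses g' then g else g').
Proof.
move=> [g_stable [a [b uE]] u_lvl] [g'_stable [a' [b' vE]] v_lvl].
case: leqP => cmp; split=> //.
- by exists a, (lw_mul b v); rewrite uE -!lw_mulA.
- by apply: S_level_mul u_lvl (S_level_mono _ v_lvl); lia.
- by exists (lw_mul u a'), b'; rewrite vE lw_mulA.
- by apply: S_level_mul (S_level_mono _ u_lvl) v_lvl; lia.
Qed.

Lemma height_witness_sharp e g :
  lw_idempotent e -> is_limit_word e -> height_witness e g ->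
  exists g', height_witness (lw_sharp e) g'.
Proof.
move=> e_idem e_limit [g_stable [a [b eE]] e_lvl].
have le_eg := lw_nclasses_factor_le e_idem e_limit g_stable eE.
have [e_sharp_id | e_sharp_new] := eqVneq (lw_sharp e) e.
  by exists g; rewrite e_sharp_id; split=> //; exists a, b.
have lt_eg : lw_nclasses e < lw_nclasses g.
  rewrite ltn_neqAle le_eg andbT; apply: contraNneq e_sharp_new => eq_eg.
  exact/eqP/(lw_sharp_factor_id e_idem e_limit g_stable eE).
exists (lw_sharp e); split.
- exact: lw_sharp_stable.
- by exists (@lw_one Q), (@lw_one Q); rewrite lw_mulw1 lw_mul1w.
- have sharp_lvl : S_level P (#|Q| - lw_nclasses g).+1 (lw_sharp e).
    by apply: lg_base; right; exists e.
  apply: S_level_mono sharp_lvl.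
  by have := lw_nclasses_sharp e_idem e_limit; have := lw_nclasses_le_card g; lia.
Qed.

Lemma markov_monoid_height_witness u :
  markov_monoid P u -> exists g, height_witness u g.
Proof.
elim=> [a | | {}u v _ [g wu] _ [g' wv] | e e_mm [g we] e_idem].
- by exists (@lw_one Q); apply/height_witness_base/lg_base; left; exists a.
- by exists (@lw_one Q); apply/height_witness_base/lg_base; right.
- by eexists; apply: height_witness_mul wu wv.
- exact: height_witness_sharp e_idem (markov_monoid_limit e_mm) we.
Qed.

End MarkovMonoid.

Theorem theorem4p7 (R : realFieldType) (A Q : finType) (P : prob_automaton R A Q) :
  (forall u : lword Q, markov_monoid P u -> sharp_height_le P u #|Q|) /\
  (forall u : lword Q, markov_monoid P u <-> S_level P #|Q| u).
Proof.
have mm_S_level u : markov_monoid P u -> S_level P #|Q| u.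
  move=> /markov_monoid_height_witness [g [_ _ u_lvl]].
  exact: S_level_mono (leq_subr _ _) u_lvl.
split=> [u u_mm | u]; first by exists #|Q|; split; last exact: mm_S_level.
by split; [exact: mm_S_level | exact: S_level_markov_monoid].
Qed.
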